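(* For $0\le i\le n$, $dp(0,i)=(0,\pi_0)$ is the smallest pair in $DP_i$, and it is the only pair in $DP_i$ whose second component equals $\pi_0$.
   Context: Let $x_0\le x_1\le\cdots\le x_{n+1}$ be real numbers, $\{x\}=x-\lfloor x\rfloor$, and let $\pi=(\pi_0,\dots,\pi_{n+1})$ be the permutation of $\{0,\dots,n+1\}$ such that for $0\le i<j\le n+1$, $\pi_i>\pi_j$ iff $(\{x_i\},-x_i,i)<(\{x_j\},-x_j,j)$ lexicographically. For a sequence of indices $s_0<\cdots<s_k$, a drop is a consecutive pair $(s_{h-1},s_h)$ with $\pi_{s_{h-1}}>\pi_{s_h}$. For $0\le h\le i\le n$, $dp(h,i)$ is the pair $(d(h,i),p(h,i))$, where $d(h,i)$ is the minimum number of drops over all sequences of $h+1$ indices $0=s_0<s_1<\cdots<s_h\le i$, and $p(h,i)$ is the minimum of $\pi_{s_h}$ over all such sequences having exactly $d(h,i)$ drops. Let $DP_i=\{dp(h,i)\mid 0\le h\le i\}$. Pairs are compared lexicographically. *)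

From HB Require Import structures.
From mathcomp Require Import all_boot all_order all_algebra.
From mathcomp Require Import reals.
Set Implicit Arguments. Unset Strict Implicit. Unset Printing Implicit Defensive.
Import Order.TTheory GRing.Theory Num.Theory.
Local Open Scope ring_scope.

Definition fracp (R : realType) (x : R) : R := x - (Num.floor x)%:~R.

Definition key_lt (R : realType) (x : nat -> R) (i j : nat) : bool :=
  (fracp (x i) < fracp (x j)) ||
  ((fracp (x i) == fracp (x j)) &&
   ((- x i < - x j) || ((- x i == - x j) && (i < j)%N))).

Definition is_perm_upto (n : nat) (pi : nat -> nat) : Prop :=
  (forall i, (i <= n.+1)%N -> (pi i <= n.+1)%N) /\
  (forall i j, (i <= n.+1)%N -> (j <= n.+1)%N -> pi i = pi j -> i = j).

Definition drops (pi : nat -> nat) (s : seq nat) : nat :=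
  count (fun p : nat * nat => (pi p.2 < pi p.1)%N) (zip s (behead s)).

Definition valid_seq (h i : nat) (s : seq nat) : bool :=
  [&& size s == h.+1, head 1%N s == 0%N, sorted ltn s & all (fun t => t <= i)%N s].

Definition is_dp (pi : nat -> nat) (h i : nat) (dp : nat * nat) : Prop :=
  let: (d, p) := dp in
  [/\ (exists2 s, valid_seq h i s & drops pi s = d),
      (forall s, valid_seq h i s -> (d <= drops pi s)%N),
      (exists2 s, valid_seq h i s & (drops pi s = d /\ pi (last 0%N s) = p)) &
      (forall s, valid_seq h i s -> drops pi s = d -> (p <= pi (last 0%N s))%N)].

Definition in_DP (pi : nat -> nat) (i : nat) (dp : nat * nat) : Prop :=
  exists2 h, (h <= i)%N & is_dp pi h i dp.

Definition pair_le (a b : nat * nat) : bool :=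
  (a.1 < b.1)%N || ((a.1 == b.1) && (a.2 <= b.2)%N).

From HB Require Import structures.
From mathcomp Require Import all_boot all_order all_algebra.
From mathcomp Require Import reals.
Import Order.TTheory GRing.Theory Num.Theory.
Local Open Scope ring_scope.

(* Only the injectivity of [pi] matters. A drop-free sequence never lowers
   [pi], so every sequence starting at [s_0 = 0] either has a drop or ends
   at an index [k] with [pi 0 <= pi k]; this makes [(0, pi 0)] the least pair.
   Reaching [pi 0] again forces the sequence to end at [0], i.e. to be
   [[:: 0]], which has no drop. *)

Section Drops.

Variable pi : nat -> nat.

Lemma drops_eq0 (a : nat) (t : seq nat) :
  (drops pi (a :: t) == 0%N) = path (relpre pi leq) a t.
Proof.
elim: t a => [|b t IH] a //=.
by rewrite -IH /drops /= addn_eq0 eqb0 -leqNgt.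
Qed.

Lemma drops_eq0_last (a : nat) (t : seq nat) :
  drops pi (a :: t) = 0%N -> (pi a <= pi (last a t))%N.
Proof.
have pi_le_trans : transitive (relpre pi leq).
  by move=> y u v; apply: leq_trans.
move/eqP; rewrite drops_eq0 => /(order_path_min pi_le_trans) /allP.
by case: t => [|b t] //= /(_ _ (mem_last b t)).
Qed.

End Drops.

Section ValidSeq.

Context {h i : nat} {s : seq nat}.
Hypothesis vs : valid_seq h i s.

Lemma valid_seq_cons0 : s = 0%N :: behead s.
Proof. by case/and4P: vs; case: s => //= a t _ /eqP ->. Qed.

Lemma valid_seq_last_le : (last 0%N s <= i)%N.
Proof.
case/and4P: vs => _ _ _ /allP; apply.
by rewrite valid_seq_cons0; apply: (mem_last 0%N (behead s)).
Qed.

Lemma valid_seq_last_gt0 : behead s != [::] -> (0 < last 0%N s)%N.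
Proof.
case/and4P: vs => _ _ + _; rewrite valid_seq_cons0.
move=> /(order_path_min ltn_trans) /allP; case: (behead s) => [|b t] // lt0 _.
exact: lt0 (mem_last b t).
Qed.

End ValidSeq.

Section DP0.

Variables (pi : nat -> nat) (i : nat).

Lemma valid_seq_drops0_last (h : nat) (s : seq nat) :
  valid_seq h i s -> drops pi s = 0%N -> (pi 0%N <= pi (last 0%N s))%N.
Proof. by move=> vs; rewrite (valid_seq_cons0 vs); apply: drops_eq0_last. Qed.

Lemma is_dp0 : is_dp pi 0 i (0%N, pi 0%N).
Proof.
split=> //; [by exists [:: 0%N] | by exists [:: 0%N] |].
exact: valid_seq_drops0_last.
Qed.

Lemma is_dp_ge_dp0 (h : nat) (dp : nat * nat) :
  is_dp pi h i dp -> pair_le (0%N, pi 0%N) dp.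
Proof.
case: dp => [[|d] p] [_ _ [s vs [ds <-]] _] //=.
exact: valid_seq_drops0_last vs ds.
Qed.

Lemma is_dp_eq_dp0 (h : nat) (dp : nat * nat) :
  (forall k, (k <= i)%N -> pi k = pi 0%N -> k = 0%N) ->
  is_dp pi h i dp -> dp.2 = pi 0%N -> dp = (0%N, pi 0%N).
Proof.
move=> pi_inj0; case: dp => d p [_ _ [s vs [ds ps]] _] /= p0.
have last0 : last 0%N s = 0%N.
  by apply: pi_inj0; [exact: valid_seq_last_le vs | rewrite ps].
have s0 : s = [:: 0%N].
  rewrite (valid_seq_cons0 vs); case: (behead s) (valid_seq_last_gt0 vs) => //.
  by move=> b t; rewrite last0 ltnn => /(_ isT).
by rewrite -ds -p0 s0.
Qed.

End DP0.

Theorem lemma7 (R : realType) (n : nat) (x : nat -> R) (pi : nat -> nat)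
  (hx : forall k, (k <= n)%N -> x k <= x k.+1)
  (hperm : is_perm_upto n pi)
  (hpi : forall i j, (i < j)%N -> (j <= n.+1)%N ->
           ((pi j < pi i)%N <-> key_lt x i j))
  (i : nat) (hi : (i <= n)%N) :
  is_dp pi 0 i (0%N, pi 0%N) /\
  (forall dp, in_DP pi i dp -> pair_le (0%N, pi 0%N) dp) /\
  (forall dp, in_DP pi i dp -> dp.2 = pi 0%N -> dp = (0%N, pi 0%N)).
Proof.
have pi_inj0 k : (k <= i)%N -> pi k = pi 0%N -> k = 0%N.
  by case: hperm => _ pi_inj le_ki; apply: pi_inj; rewrite // (leq_trans le_ki) ?leqW.
split; first exact: is_dp0.
by split=> dp [h _ dp_h]; [exact: is_dp_ge_dp0 dp_h | exact: is_dp_eq_dp0 dp_h].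
Qed.
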